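(* Let $\mathcal{T}\in(\mathbb{R}^4)^{\otimes 4}$ be the symmetric tensor corresponding to the quartic $x^4-3y^4+12x^2yz+12xy^2w$ in the variables $x,y,z,w$. Then $\operatorname{drk}_2\mathcal{T}=\operatorname{sdrk}_2\mathcal{T}=9$.
   Context: All tensors are real. Symmetric tensors $\mathcal{T}\in(\mathbb{R}^I)^{\otimes d}$ correspond bijectively to homogeneous degree $d$ polynomials via $\mathcal{T}\leftrightarrow\sum_{k_1,\dots,k_d\in I}\mathcal{T}(k_1|\dots|k_d)x_{k_1}\cdots x_{k_d}$. For a symmetric $\mathcal{T}\in(\mathbb{R}^I)^{\otimes d}$ and $1\le j\le d$, the slice space $\mathcal{L}_j\subset(\mathbb{R}^I)^{\otimes j}$ is the linear span of all order $j$ slices obtained by fixing the last $d-j$ indices of $\mathcal{T}$ to arbitrary values. $\operatorname{drk}_j\mathcal{T}$ is the smallest $r$ such that there are $r$ decomposable tensors $v_1\otimes\cdots\otimes v_j$ whose linear span contains $\mathcal{L}_j$; $\operatorname{sdrk}_j\mathcal{T}$ is the smallest $r$ such that there are $r$ symmetric decomposable tensors $\lambda v^{\otimes j}$ whose linear span contains $\mathcal{L}_j$. *)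

From HB Require Import structures.
From mathcomp Require Import all_boot all_order all_algebra.
From mathcomp Require Import reals.
Set Implicit Arguments. Unset Strict Implicit. Unset Printing Implicit Defensive.
Import Order.TTheory GRing.Theory Num.Theory.
Local Open Scope ring_scope.

Section Defs.
Variable R : realType.

Definition tensor4 := 'I_4 -> 'I_4 -> 'I_4 -> 'I_4 -> R.

(* Coefficient of x^a y^b z^c w^d in x^4 - 3y^4 + 12x^2yz + 12xy^2w
   (variables x,y,z,w <-> indices 0,1,2,3). *)
Definition quartic_coef (e : nat * nat * nat * nat) : R :=
  match e with
  | (4, 0, 0, 0)%N => 1
  | (0, 4, 0, 0)%N => -3
  | (2, 1, 1, 0)%N => 12
  | (1, 2, 0, 1)%N => 12
  | _ => 0
  end.

Definition idx_count (k1 k2 k3 k4 : 'I_4) (i : nat) : nat :=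
  ((k1 == i :> nat) + (k2 == i :> nat) + (k3 == i :> nat) + (k4 == i :> nat))%N.

(* The symmetric tensor corresponding to a quartic with coefficient function
   coef: T(k) = coef(exponent of k) / (number of index tuples with that
   exponent vector), so that sum_k T(k) x_k1 x_k2 x_k3 x_k4 = the quartic. *)
Definition sym_tensor_of_quartic (coef : nat * nat * nat * nat -> R) : tensor4 :=
  fun k1 k2 k3 k4 =>
    let c := idx_count k1 k2 k3 k4 in
    coef (c 0, c 1, c 2, c 3)%N /
      ((4`! %/ ((c 0)`! * (c 1)`! * (c 2)`! * (c 3)`!))%N)%:R.

Definition T_quartic : tensor4 := sym_tensor_of_quartic quartic_coef.

Definition slice2 (T : tensor4) (k3 k4 : 'I_4) : 'M[R]_4 :=
  \matrix_(i, j) T i j k3 k4.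

Definition slice_space2 (T : tensor4) : {vspace 'M[R]_4} :=
  <<[seq slice2 T k.1 k.2 | k : 'I_4 * 'I_4]>>%VS.

Definition dec2 (u v : 'rV[R]_4) : 'M[R]_4 := u^T *m v.

Definition drk2_bound (T : tensor4) (r : nat) : Prop :=
  exists s : seq ('rV[R]_4 * 'rV[R]_4),
    size s = r /\ (slice_space2 T <= <<[seq dec2 p.1 p.2 | p <- s]>>)%VS.

Definition sdrk2_bound (T : tensor4) (r : nat) : Prop :=
  exists s : seq (R * 'rV[R]_4),
    size s = r /\ (slice_space2 T <= <<[seq p.1 *: dec2 p.2 p.2 | p <- s]>>)%VS.

End Defs.

Definition is_least (P : nat -> Prop) (n : nat) : Prop :=
  P n /\ forall m, P m -> (n <= m)%N.

Definition drk2 (R : realType) (T : tensor4 R) (r : nat) : Prop :=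
  is_least (drk2_bound T) r.
Definition sdrk2 (R : realType) (T : tensor4 R) (r : nat) : Prop :=
  is_least (sdrk2_bound T) r.

(* The slice space L_2 of the tensor consists of the symmetric 4x4 matrices
   [[a c t q]; [c b p t]; [t p 0 0]; [q t 0 0]]. Polarization writes every such
   matrix as a combination of 9 squares v^T v, giving sdrk_2 <= 9, and sdrk_2
   bounds drk_2.

   Conversely, suppose L_2 lies in the span of r <= 8 products u_i^T v_i, so that
   every element of L_2 reads P diag(d) Q. The coefficient vectors d of the
   (a, b, c)-directions are independent, so they are invertible on 3 coordinates;
   subtracting them, we obtain elements of L_2 with (p, q, t)-part equal to
   (1,0,0), (0,1,0), (0,0,1) whose coefficients vanish on these coordinates, i.e.
   that live in the span of at most 5 rank-one terms. A generic combination X0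
   with weights (s, s^2, 1) is invertible, and Strassen's argument bounds the rank
   of Xa X0^-1 Xb - Xb X0^-1 Xa by 2 (5 - 4) = 2, while a direct computation shows
   that this commutator has rank at least 3. *)
From HB Require Import structures.
From mathcomp Require Import all_boot all_order all_algebra.
From mathcomp Require Import reals.
From mathcomp Require Import ring zify.
Set Implicit Arguments. Unset Strict Implicit. Unset Printing Implicit Defensive.
Import Order.TTheory GRing.Theory Num.Theory.
Local Open Scope ring_scope.

Section DiagonalFactorizations.
Variable F : fieldType.

Lemma mulmx_diag_support r (S : {set 'I_r}) m n (P : 'M[F]_(m, r)) (Q : 'M_(r, n))
    (d : 'rV_r) (h := enum_val : 'I_#|S| -> 'I_r) :
  (forall i, i \notin S -> d 0 i = 0) ->
  P *m diag_mx d *m Q = colsub h P *m diag_mx (colsub h d) *m rowsub h Q.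
Proof.
move=> dS; apply/matrixP => a b; rewrite !mxE.
rewrite (bigID (mem S)) /= [X in _ + X]big1 ?addr0; last first.
  by move=> i /dS d0; rewrite mul_mx_diag mxE d0 mulr0 mul0r.
rewrite big_enum_val; apply: eq_bigr => i _.
by rewrite !mul_mx_diag !mxE.
Qed.

Lemma strassen_commutator_rank n m (P : 'M[F]_(n, m)) (Q : 'M_(m, n))
    (d0 da db : 'rV_m) (Y : 'M_n) :
  (forall i, d0 0 i != 0) -> P *m diag_mx d0 *m Q *m Y = 1%:M ->
  (\rank (P *m diag_mx da *m Q *m Y *m (P *m diag_mx db *m Q)
          - P *m diag_mx db *m Q *m Y *m (P *m diag_mx da *m Q))%R <= (m - n).*2)%N.
Proof.
move=> d0_neq0 XY.
(* N is a right inverse of P, so E := 1 - N P has rank at most m - n, and the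
   commutator is P (Eb E Da - Ea E Db) Q with Ea := Da D0^-1. *)
pose N := diag_mx d0 *m Q *m Y.
have PN : P *m N = 1%:M by rewrite /N !mulmxA.
pose E := 1%:M - N *m P.
have EN : E *m N = 0 by rewrite mulmxBl mul1mx -mulmxA PN mulmx1 subrr.
have rankE : (\rank E <= m - n)%N.
  have := mulmx0_rank_max EN; have := mxrankM_maxr P N; rewrite PN mxrank1; lia.
pose quot (d : 'rV_m) := diag_mx (\row_i (d 0 i / d0 0 i)).
have quotK d : diag_mx d *m Q *m Y = quot d *m N.
  rewrite /N !mulmxA mulmx_diag; do 2 congr (_ *m _); congr diag_mx.
  by apply/rowP => i; rewrite !mxE divfK.
have quot_comm : quot da *m diag_mx db = quot db *m diag_mx da.
  rewrite !mulmx_diag; congr diag_mx; apply/rowP => i.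
  by rewrite !mxE !(mulrAC _ (d0 0 i)^-1) (mulrC (da 0 i)).
have NP : N *m P = 1%:M - E by rewrite /E opprB addrC subrK.
clearbody N E.
have prod d d' : P *m diag_mx d *m Q *m Y *m (P *m diag_mx d' *m Q)
    = P *m (quot d *m (1%:M - E) *m diag_mx d') *m Q.
  have -> : P *m diag_mx d *m Q *m Y = P *m quot d *m N.
    by rewrite -[RHS]mulmxA -quotK !mulmxA.
  by rewrite -NP !mulmxA.
have mid : quot da *m (1%:M - E) *m diag_mx db - quot db *m (1%:M - E) *m diag_mx da
    = quot db *m E *m diag_mx da - quot da *m E *m diag_mx db.
  rewrite !mulmxBr !mulmx1 !mulmxBl quot_comm.
  by rewrite opprB addrC addrA subrK.
rewrite !prod -mulmxBl -mulmxBr mid.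
apply: leq_trans (mxrankM_maxl _ _) _; apply: leq_trans (mxrankM_maxr _ _) _.
apply: leq_trans (mxrank_add _ _) _; rewrite mxrank_opp -addnn.
have rank_mid a b : (\rank (quot a *m E *m diag_mx b) <= m - n)%N.
  by apply: leq_trans (mxrankM_maxl _ _) _; apply: leq_trans (mxrankM_maxr _ _) _.
exact: leq_add.
Qed.

Lemma strassen_commutator_rank_support n r (S : {set 'I_r}) (P : 'M[F]_(n, r))
    (Q : 'M_(r, n)) (d0 da db : 'rV_r) (Y : 'M_n) :
  (forall i, i \in S -> d0 0 i != 0) ->
  (forall i, i \notin S -> d0 0 i = 0) ->
  (forall i, i \notin S -> da 0 i = 0) ->
  (forall i, i \notin S -> db 0 i = 0) ->
  P *m diag_mx d0 *m Q *m Y = 1%:M ->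
  (\rank (P *m diag_mx da *m Q *m Y *m (P *m diag_mx db *m Q)
          - P *m diag_mx db *m Q *m Y *m (P *m diag_mx da *m Q))%R <= (#|S| - n).*2)%N.
Proof.
move=> d0S d0_off da_off db_off XY.
rewrite !(mulmx_diag_support P Q d0_off, mulmx_diag_support P Q da_off,
          mulmx_diag_support P Q db_off) in XY *.
apply: strassen_commutator_rank XY => i; rewrite mxE; exact/d0S/enum_valP.
Qed.
End DiagonalFactorizations.

Lemma mxrank_mxsub (F : fieldType) m n m' n' (f : 'I_m' -> 'I_m) (g : 'I_n' -> 'I_n)
    (A : 'M[F]_(m, n)) :
  (\rank (mxsub f g A) <= \rank A)%N.
Proof.
rewrite mxsubcr -[rowsub f A]mulmx1 -mulmx_colsub rowsubE.
exact: leq_trans (mxrankM_maxl _ _) (mxrankM_maxr _ _).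
Qed.

Lemma row_free_colsub_unit (F : fieldType) k r (A : 'M[F]_(k, r)) :
  row_free A -> exists2 f : 'I_k -> 'I_r, injective f & colsub f A \in unitmx.
Proof.
move=> freeA; have rankAt : \rank A^T = k by rewrite mxrank_tr; exact/eqP.
have := maxrowsub_free A^T; have := @maxrankfun_inj _ _ _ A^T.
move: (maxrankfun A^T); rewrite rankAt => f injf freef.
by exists f => //; rewrite -unitmx_tr -row_free_unit trmx_mxsub.
Qed.

Lemma exists_nonroot (R : numDomainType) (p : {poly R}) :
  p != 0 -> exists x, ~~ root p x.
Proof.
move=> p_neq0; pose xs := [seq i%:R | i <- iota 0 (size p)] : seq R.
have uniq_xs : uniq xs.
  by rewrite map_inj_uniq ?iota_uniq // => i j /eqP; rewrite eqr_nat => /eqP.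
have [all_roots|/allPn[x _ ?]] := boolP (all (root p) xs); last by exists x.
by have := max_poly_roots p_neq0 all_roots uniq_xs; rewrite size_map size_iota ltnn.
Qed.

Lemma exists_generic_scalar (R : numDomainType) r (a b c : 'rV[R]_r) :
  exists2 s : R, 1 - s ^+ 3 != 0 &
    forall i, [|| a 0 i != 0, b 0 i != 0 | c 0 i != 0] ->
      s * a 0 i + s ^+ 2 * b 0 i + c 0 i != 0.
Proof.
pose q i : {poly R} := a 0 i *: 'X + b 0 i *: 'X^2 + (c 0 i)%:P.
have qE i x : (q i).[x] = x * a 0 i + x ^+ 2 * b 0 i + c 0 i.
  by rewrite !hornerD !hornerZ hornerX hornerXn hornerC mulrC [b 0 i * _]mulrC.
pose nz i := [|| a 0 i != 0, b 0 i != 0 | c 0 i != 0].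
have q_neq0 i : nz i -> q i != 0.
  apply: contraTneq => q0; have := congr1 (fun p : {poly R} => (p`_0, p`_1, p`_2)) q0.
  rewrite /q !coefD !coefZ !coefX !coefXn !coefC /= => -[c0 a0 b0].
  move: c0 a0 b0; rewrite /nz !mulr0 !mulr1 !add0r !addr0 => -> -> ->.
  by rewrite !eqxx.
have cubic_neq0 : (1 - 'X^3 : {poly R}) != 0.
  apply/eqP => /(congr1 (fun p : {poly R} => p`_0)).
  by rewrite coefB coef1 coefXn coef0 subr0 => /eqP; rewrite oner_eq0.
have [s] := exists_nonroot (mulf_neq0 cubic_neq0 (introT (prodf_neq0 _ _) q_neq0)).
rewrite rootM negb_or => /andP[s3]; rewrite /root horner_prod => /prodf_neq0 sq.
exists s; last by move=> i /sq; rewrite qE.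
by move: s3; rewrite /root hornerD hornerN hornerXn hornerC.
Qed.

Section RankOneSpans.
Variables (F : fieldType) (m n : nat) (s : seq ('rV[F]_m * 'rV[F]_n)).

Definition outer_colmx : 'M[F]_(m, size s) := \matrix_(a, i) (nth 0 s i).1 0 a.
Definition outer_rowmx : 'M[F]_(size s, n) := \matrix_(i, b) (nth 0 s i).2 0 b.

Definition outer_tuple :=
  map_tuple (fun p : 'rV_m * 'rV_n => p.1^T *m p.2) (in_tuple s).

Definition outer_coefs (A : 'M[F]_(m, n)) : 'rV_(size s) :=
  \row_i coord outer_tuple i A.

Fact outer_coefs_is_linear : linear outer_coefs.
Proof. by move=> a A B; apply/rowP => i; rewrite !mxE linearP. Qed.

HB.instance Definition _ :=
  GRing.isLinear.Build F 'M[F]_(m, n) 'rV_(size s) _ outer_coefs outer_coefs_is_linear.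

Lemma outer_coefsK (A : 'M[F]_(m, n)) :
  A \in <<[seq p.1^T *m p.2 | p <- s]>>%VS ->
  outer_colmx *m diag_mx (outer_coefs A) *m outer_rowmx = A.
Proof.
move=> /(@coord_span _ _ _ outer_tuple) {2}->.
apply/matrixP => a b; rewrite summxE !mxE; apply: eq_bigr => i _.
rewrite mul_mx_diag !mxE (nth_map 0) ?mxE ?big_ord1 ?mxE //.
by rewrite mulrCA mulrA.
Qed.
End RankOneSpans.

Section SliceSpace.
Variable R : realType.

Definition slice_mx (a b c p q t : R) : 'M[R]_4 :=
  \matrix_(i, j)
    match (i : nat, j : nat) with
    | (0, 0)%N => a | (1, 1)%N => b | (0, 1)%N | (1, 0)%N => c
    | (1, 2)%N | (2, 1)%N => p | (0, 3)%N | (3, 0)%N => q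
    | (0, 2)%N | (2, 0)%N | (1, 3)%N | (3, 1)%N => t | _ => 0
    end.

Lemma slice_mxD a b c p q t a' b' c' p' q' t' :
  slice_mx a b c p q t + slice_mx a' b' c' p' q' t'
  = slice_mx (a + a') (b + b') (c + c') (p + p') (q + q') (t + t').
Proof.
apply/matrixP => i j; rewrite !mxE.
by case: i => [[|[|[|[|//]]]] ?]; case: j => [[|[|[|[|//]]]] ?]; rewrite /= ?addr0.
Qed.

Lemma slice_mxZ k a b c p q t :
  k *: slice_mx a b c p q t
  = slice_mx (k * a) (k * b) (k * c) (k * p) (k * q) (k * t).
Proof.
apply/matrixP => i j; rewrite !mxE.
by case: i => [[|[|[|[|//]]]] ?]; case: j => [[|[|[|[|//]]]] ?]; rewrite /= ?mulr0.
Qed.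

Definition quartic_slice (k l : 'I_4) : 'M[R]_4 :=
  match (k : nat, l : nat) with
  | (0, 0)%N => slice_mx 1 0 0 1 0 0
  | (1, 1)%N => slice_mx 0 (-3) 0 0 1 0
  | (0, 1)%N | (1, 0)%N => slice_mx 0 0 0 0 0 1
  | (0, 2)%N | (2, 0)%N | (1, 3)%N | (3, 1)%N => slice_mx 0 0 1 0 0 0
  | (1, 2)%N | (2, 1)%N => slice_mx 1 0 0 0 0 0
  | (0, 3)%N | (3, 0)%N => slice_mx 0 1 0 0 0 0
  | _ => 0
  end.

Lemma slice2_T_quartic k l : slice2 (T_quartic R) k l = quartic_slice k l.
Proof.
have n12 : (12%:R : R) != 0 by rewrite pnatr_eq0.
apply/matrixP => i j; rewrite !mxE /T_quartic /sym_tensor_of_quartic /idx_count.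
case: k => [[|[|[|[|//]]]] ?]; case: l => [[|[|[|[|//]]]] ?];
case: i => [[|[|[|[|//]]]] ?]; case: j => [[|[|[|[|//]]]] ?];
by rewrite /= ?mxE /= ?mul0r ?divr1 ?divff.
Qed.

Lemma slice_mx_in_slice_space (V : {vspace 'M[R]_4}) a b c p q t :
  (slice_space2 (T_quartic R) <= V)%VS -> slice_mx a b c p q t \in V.
Proof.
move=> sub; have mem k l : quartic_slice k l \in V.
  rewrite -slice2_T_quartic; apply: (subvP sub); apply: memv_span.
  by apply/mapP; exists (k, l); rewrite ?mem_enum.
have -> : slice_mx a b c p q t =
    a *: quartic_slice (inord 1) (inord 2) + b *: quartic_slice (inord 0) (inord 3)
  + c *: quartic_slice (inord 0) (inord 2)
  + p *: (quartic_slice (inord 0) (inord 0) - quartic_slice (inord 1) (inord 2))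
  + q *: (quartic_slice (inord 1) (inord 1) + 3 *: quartic_slice (inord 0) (inord 3))
  + t *: quartic_slice (inord 0) (inord 1).
  rewrite /quartic_slice !inordK // -scaleN1r.
  by rewrite !slice_mxZ !slice_mxD !slice_mxZ !slice_mxD; congr slice_mx; ring.
by repeat first [apply: memvD | rewrite memvN | apply: memvZ | apply: mem].
Qed.

Lemma sdrk2_bound_drk2_bound (T : tensor4 R) r : sdrk2_bound T r -> drk2_bound T r.
Proof.
case=> s [<- sub]; exists [seq (x.1 *: x.2, x.2) | x <- s]; rewrite size_map.
split=> //; apply: (subv_trans sub); apply/span_subvP => _ /mapP [x xs ->].
apply: memv_span; apply/mapP; exists (x.1 *: x.2, x.2); first exact: map_f.
by rewrite /dec2 linearZ /= scalemxAl.
Qed.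

Definition row4 (a b c d : R) : 'rV[R]_4 := \row_i [:: a; b; c; d]`_i.

Definition sym9 : seq 'rV[R]_4 :=
  [:: row4 1 0 0 0; row4 0 1 0 0; row4 0 0 1 0; row4 0 0 0 1;
      row4 1 1 0 0; row4 0 1 1 0; row4 1 0 0 1; row4 1 0 1 0; row4 0 1 0 1].

Lemma slice_mx_in_sym9_span a b c p q t :
  slice_mx a b c p q t \in <<[seq dec2 v v | v <- sym9]>>%VS.
Proof.
pose sq (v : 'rV[R]_4) := dec2 v v.
have mem v : v \in sym9 -> sq v \in <<[seq dec2 v v | v <- sym9]>>%VS.
  by move=> sv; apply/memv_span/map_f.
(* polarization: u^T v + v^T u = sq (u + v) - sq u - sq v *)
have -> : slice_mx a b c p q t =
    a *: sq (row4 1 0 0 0) + b *: sq (row4 0 1 0 0)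
  + c *: (sq (row4 1 1 0 0) - sq (row4 1 0 0 0) - sq (row4 0 1 0 0))
  + p *: (sq (row4 0 1 1 0) - sq (row4 0 1 0 0) - sq (row4 0 0 1 0))
  + q *: (sq (row4 1 0 0 1) - sq (row4 1 0 0 0) - sq (row4 0 0 0 1))
  + t *: (sq (row4 1 0 1 0) - sq (row4 1 0 0 0) - sq (row4 0 0 1 0)
          + sq (row4 0 1 0 1) - sq (row4 0 1 0 0) - sq (row4 0 0 0 1)).
  apply/matrixP => i j; rewrite /sq /dec2 !(mxE, big_ord1).
  case: i => [[|[|[|[|//]]]] ?]; case: j => [[|[|[|[|//]]]] ?];
  by rewrite /= ?mxE /=; ring.
by repeat first [apply: memvD | rewrite memvN | apply: memvZ
                | apply: mem; rewrite !inE eqxx ?orbT].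
Qed.

Lemma sdrk2_bound_T_quartic : sdrk2_bound (T_quartic R) 9.
Proof.
exists [seq (1, v) | v <- sym9]; split=> //; rewrite -map_comp.
under eq_map do rewrite /= scale1r.
apply/span_subvP => _ /mapP [[k l] _ ->]; rewrite /= slice2_T_quartic.
case: k => [[|[|[|[|//]]]] ?]; case: l => [[|[|[|[|//]]]] ?];
  rewrite /quartic_slice /= ?slice_mx_in_sym9_span ?mem0v //.
Qed.

(* With B := [[1, s^2]; [s, 1]], the matrix slice_mx g1 g2 g3 s s^2 1 is the block
   matrix [[A, B]; [B^T, 0]]; its inverse is [[0, B^-T]; [B^-1, - B^-1 A B^-T]],
   and det B = 1 - s^3. *)
Definition slice_inv (s g1 g2 g3 : R) : 'M[R]_4 :=
  let c := (1 - s ^+ 3)^-1 in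
  let Bi k l := match (k, l) with
    | (0, 0)%N | (1, 1)%N => c | (0, 1)%N => - s ^+ 2 * c | (1, 0)%N => - s * c
    | _ => 0 end in
  let W k l :=
    - (Bi k 0 * (Bi l 0 * g1 + Bi l 1 * g3) + Bi k 1 * (Bi l 0 * g3 + Bi l 1 * g2)) in
  \matrix_(i, j)
    if (i < 2)%N then (if (j < 2)%N then 0 else Bi (j - 2)%N i)
    else if (j < 2)%N then Bi (i - 2)%N j else W (i - 2)%N (j - 2)%N.

Lemma slice_mx_mulmx_inv s g1 g2 g3 : 1 - s ^+ 3 != 0 ->
  slice_mx g1 g2 g3 s (s ^+ 2) 1 *m slice_inv s g1 g2 g3 = 1%:M.
Proof.
move=> s3; apply/matrixP => i j; rewrite !mxE !big_ord_recr big_ord0 /= !mxE.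
by case: i => [[|[|[|[|//]]]] ?]; case: j => [[|[|[|[|//]]]] ?]; rewrite /=; field.
Qed.

Lemma slice_commutator_rank s a1 a2 a3 b1 b2 b3 g1 g2 g3 : 1 - s ^+ 3 != 0 ->
  (3 <= \rank (slice_mx a1 a2 a3 1 0 0 *m slice_inv s g1 g2 g3 *m slice_mx b1 b2 b3 0 1 0
              - slice_mx b1 b2 b3 0 1 0 *m slice_inv s g1 g2 g3 *m slice_mx a1 a2 a3 1 0 0)%R)%N.
Proof.
move=> s3; set Xa := slice_mx a1 a2 a3 1 0 0; set Xb := slice_mx b1 b2 b3 0 1 0.
set Y := slice_inv s g1 g2 g3; set K := (X in \rank X); set c := (1 - s ^+ 3)^-1.
have c_neq0 : c != 0 by rewrite invr_eq0.
have K_expand i j : K i j = \sum_(k < 4) \sum_(l < 4)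
    (Xa i l * Y l k * Xb k j - Xb i l * Y l k * Xa k j).
  rewrite /K !mxE -sumrB; apply: eq_bigr => k _; rewrite !mxE !big_distrl -sumrB.
  by apply: eq_bigr => l _.
(* rows 2, 0, 1 and columns 0, 2, 3 of K form a lower triangular minor *)
pose rows (i : 'I_3) : 'I_4 := inord (nth 0 [:: 2; 0; 1] i)%N.
pose cols (j : 'I_3) : 'I_4 := inord (nth 0 [:: 0; 2; 3] j)%N.
pose T := mxsub rows cols K.
have T_upper (i j : 'I_3) :
    (i <= j)%N -> T i j = (i == j :> nat)%:R * nth 0 [:: c; - c; c] i.
{ rewrite /T mxE /rows /cols.
  case: i => [[|[|[|//]]] ?]; case: j => [[|[|[|//]]] ?] //= _.
  all: rewrite K_expand; (under eq_bigr => k _ do under eq_bigr => l _ do rewrite !mxE);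
    rewrite !inordK //; (under eq_bigr => k _ do rewrite !big_ord_recr big_ord0);
    rewrite !big_ord_recr big_ord0 /= -/c; ring. }
have T_trig : is_trig_mx T.
  apply/is_trig_mxP => i j ltij.
  by rewrite T_upper ?(ltnW ltij) // (ltn_eqF ltij) mul0r.
have detT : \det T = - c ^+ 3.
  rewrite (det_trig T_trig) !big_ord_recr big_ord0 /= !T_upper //=.
  by rewrite -/c; ring.
have T_unit : T \in unitmx by rewrite unitmxE detT unitfE oppr_eq0 expf_neq0.
by have := mxrank_mxsub rows cols K; rewrite (mxrank_unit T_unit).
Qed.

Lemma slice_triple_support_gt5 r (P : 'M[R]_(4, r)) (Q : 'M_(r, 4)) (c1 c2 c3 : 'rV_r)
    a1 a2 a3 b1 b2 b3 g1 g2 g3 :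
  P *m diag_mx c1 *m Q = slice_mx a1 a2 a3 1 0 0 ->
  P *m diag_mx c2 *m Q = slice_mx b1 b2 b3 0 1 0 ->
  P *m diag_mx c3 *m Q = slice_mx g1 g2 g3 0 0 1 ->
  (5 < #|[set i | [|| c1 0 i != 0, c2 0 i != 0 | c3 0 i != 0]]%R|)%N.
Proof.
move=> X1 X2 X3; set S := [set i | _]; rewrite ltnNge; apply/negP => small.
have [s s3 gen] := exists_generic_scalar c1 c2 c3.
pose d0 := s *: c1 + s ^+ 2 *: c2 + c3.
pose h1 := s * a1 + s ^+ 2 * b1 + g1; pose h2 := s * a2 + s ^+ 2 * b2 + g2.
pose h3 := s * a3 + s ^+ 2 * b3 + g3.
have X0 : P *m diag_mx d0 *m Q = slice_mx h1 h2 h3 s (s ^+ 2) 1.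
  rewrite !linearD !linearZ /= !mulmxDl -!scalemxAl X1 X2 X3.
  by rewrite !slice_mxZ !slice_mxD; congr slice_mx; ring.
have XY : P *m diag_mx d0 *m Q *m slice_inv s h1 h2 h3 = 1%:M.
  by rewrite X0 slice_mx_mulmx_inv.
have d0S i : i \in S -> d0 0 i != 0 by rewrite inE => /gen; rewrite !mxE.
have c_off i : i \notin S -> [/\ c1 0 i = 0, c2 0 i = 0 & c3 0 i = 0].
  by rewrite inE !negb_or !negbK => /and3P[/eqP ? /eqP ? /eqP ?].
have d0_off i : i \notin S -> d0 0 i = 0.
  by case/c_off=> c1i c2i c3i; rewrite !mxE c1i c2i c3i !mulr0 !addr0.
have c1_off i : i \notin S -> c1 0 i = 0 by case/c_off.
have c2_off i : i \notin S -> c2 0 i = 0 by case/c_off.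
have := strassen_commutator_rank_support d0S d0_off c1_off c2_off XY.
rewrite X1 X2 => rank_le2.
have := leq_trans (slice_commutator_rank a1 a2 a3 b1 b2 b3 h1 h2 h3 s3) rank_le2.
by move: small; move: #|S| => k; lia.
Qed.

Definition lo_slice (y : 'rV[R]_3) := slice_mx (y 0 0) (y 0 1) (y 0 2%:R) 0 0 0.
Definition hi_slice (y : 'rV[R]_3) := slice_mx 0 0 0 (y 0 0) (y 0 1) (y 0 2%:R).

Fact lo_slice_is_linear : linear lo_slice.
Proof. by move=> a y z; rewrite /lo_slice slice_mxZ slice_mxD !mxE !mulr0 !addr0. Qed.
HB.instance Definition _ :=
  GRing.isLinear.Build R 'rV[R]_3 'M[R]_4 _ lo_slice lo_slice_is_linear.

Fact hi_slice_is_linear : linear hi_slice.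
Proof. by move=> a y z; rewrite /hi_slice slice_mxZ slice_mxD !mxE !mulr0 !addr0. Qed.
HB.instance Definition _ :=
  GRing.isLinear.Build R 'rV[R]_3 'M[R]_4 _ hi_slice hi_slice_is_linear.

Lemma lo_slice_eq0 y : lo_slice y = 0 -> y = 0.
Proof.
move=> /matrixP y0; apply/rowP => k; rewrite mxE.
have := y0 0 0; have := y0 1 1; have := y0 0 1; rewrite !mxE /= => e2 e1 e0.
case: k => [[|[|[|//]]] ?]; [rewrite -e0 | rewrite -e1 | rewrite -e2];
  by congr (y 0 _); apply: val_inj.
Qed.

Section Reduction.
Variables (r : nat) (P : 'M[R]_(4, r)) (Q : 'M[R]_(r, 4)).
Variable w : {linear 'M[R]_4 -> 'rV[R]_r}.
Hypothesis wK : forall a b c p q t,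
  P *m diag_mx (w (slice_mx a b c p q t)) *m Q = slice_mx a b c p q t.

Let Wlo := lin1_mx (w \o lo_slice).
Let Whi := lin1_mx (w \o hi_slice).

Lemma row_free_lo_coefs : row_free Wlo.
Proof.
apply: inj_row_free => y; rewrite mul_rV_lin1 /= => wy0; apply: lo_slice_eq0.
by rewrite -[lo_slice y]wK -/(lo_slice y) wy0 linear0 mulmx0 mul0mx.
Qed.

Lemma rank_one_count_gt8 : (8 < r)%N.
Proof.
have [f injf fU] := row_free_colsub_unit row_free_lo_coefs.
pose N := colsub f Whi *m invmx (colsub f Wlo).
pose c (k : 'I_3) := w (hi_slice (delta_mx 0 k) - lo_slice (row k N)).
have c_f k : colsub f (c k) = 0.
  rewrite /c linearB /= -[w (hi_slice _)](mul_rV_lin1 (w \o hi_slice)).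
  rewrite -[w (lo_slice _)](mul_rV_lin1 (w \o lo_slice)) -/Whi -/Wlo -rowE linearB /=.
  by rewrite [row k Whi]rowE [row k N]rowE -!mulmx_colsub -mulmxA mulmxKV // subrr.
have c_slice k : P *m diag_mx (c k) *m Q =
    slice_mx (- N k 0) (- N k 1) (- N k 2%:R) (k == 0)%:R (k == 1)%:R (k == 2%:R)%:R.
  rewrite /c -[X in _ = X]wK; congr (_ *m diag_mx (w _) *m _).
  rewrite /hi_slice /lo_slice -scaleN1r slice_mxZ slice_mxD !mxE /=.
  by congr slice_mx; rewrite ?(eq_sym k); ring.
have := slice_triple_support_gt5 (c_slice 0) (c_slice 1) (c_slice 2%:R).
set S := [set i | _]; suff : (#|S| <= r - 3)%N by lia.
have disjS : S \subset ~: [set f j | j in 'I_3].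
  have c_fj k j : c k 0 (f j) = 0 by have /rowP/(_ j) := c_f k; rewrite !mxE.
  apply/subsetP => i; rewrite !inE; apply: contraTN => /imsetP[j _ ->].
  by rewrite !c_fj eqxx.
apply: leq_trans (subset_leq_card disjS) _.
by rewrite cardsCs setCK card_imset // !card_ord.
Qed.
End Reduction.

Lemma drk2_bound_T_quartic_ge9 r : drk2_bound (T_quartic R) r -> (9 <= r)%N.
Proof.
case=> s [<- sub].
apply: (@rank_one_count_gt8 _ (outer_colmx s) (outer_rowmx s) (outer_coefs s)).
by move=> a b c p q t; apply/outer_coefsK/slice_mx_in_slice_space.
Qed.
End SliceSpace.

Theorem proposition3p6 (R : realType) :
  drk2 (T_quartic R) 9 /\ sdrk2 (T_quartic R) 9.
Proof.
have ub := sdrk2_bound_T_quartic R.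
have lb := @drk2_bound_T_quartic_ge9 R.
split; split=> [|r].
- exact: sdrk2_bound_drk2_bound.
- exact: lb.
- exact: ub.
- by move/sdrk2_bound_drk2_bound; exact: lb.
Qed.
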